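(* Let $K$ be a field, $I\subset R=K[x_1,\ldots,x_n]$ a monomial ideal, and $\mathfrak{p}$ a monomial prime ideal of $R$ containing $I$. If $I$ has the copersistence property, then the monomial localization $I(\mathfrak{p})\subset R(\mathfrak{p})$ has the copersistence property.
   Context: An ideal $I$ in a commutative Noetherian ring $R$ has the copersistence property if $\mathrm{Ass}_R(R/I^k)\supseteq\mathrm{Ass}_R(R/I^{k+1})$ for all $k\ge1$. For a monomial prime ideal $\mathfrak{p}=(x_{i_1},\ldots,x_{i_r})$, $R(\mathfrak{p})=K[x_{i_1},\ldots,x_{i_r}]$ and the monomial localization $I(\mathfrak{p})$ is the ideal of $R(\mathfrak{p})$ obtained as the image of $I$ under the $K$-algebra homomorphism $R\to R(\mathfrak{p})$ sending $x_j\mapsto1$ for all $x_j\notin\{x_{i_1},\ldots,x_{i_r}\}$ and fixing the other variables. *)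

From mathcomp Require Import all_boot all_order all_algebra.
From mathcomp Require Import mpoly.
Set Implicit Arguments. Unset Strict Implicit. Unset Printing Implicit Defensive.
Import GRing.Theory.
Local Open Scope ring_scope.

Section Ideals.
Variable R : comNzRingType.

Definition is_ideal (I : R -> Prop) : Prop :=
  [/\ I 0, (forall a b, I a -> I b -> I (a + b)) & (forall r a, I a -> I (r * a))].

Definition ideal_gen (G : R -> Prop) : R -> Prop :=
  fun f => exists s : seq (R * R),
    (forall p, p \in s -> G p.2) /\ f = \sum_(p <- s) p.1 * p.2.

Definition ideal_mul (I J : R -> Prop) : R -> Prop :=
  ideal_gen (fun x => exists a b, [/\ I a, J b & x = a * b]).

Fixpoint ideal_pow (I : R -> Prop) (k : nat) : R -> Prop :=
  match k with
  | 0 => fun _ => True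
  | k'.+1 => ideal_mul I (ideal_pow I k')
  end.

Definition is_prime_ideal (P : R -> Prop) : Prop :=
  [/\ is_ideal P, ~ P 1 & forall a b, P (a * b) -> P a \/ P b].

(* P \in Ass_R(R/J) : P is prime and P = (J : f) for some f in R *)
Definition Ass (J : R -> Prop) (P : R -> Prop) : Prop :=
  is_prime_ideal P /\ exists f : R, forall g, P g <-> J (g * f).

Definition copersistent (I : R -> Prop) : Prop :=
  forall k : nat, (1 <= k)%N ->
    forall P, Ass (ideal_pow I k.+1) P -> Ass (ideal_pow I k) P.

End Ideals.

Section Monomial.
Variables (K : fieldType) (n : nat).

Definition is_monomial_ideal (I : {mpoly K[n]} -> Prop) : Prop :=
  is_ideal I /\ exists M : 'X_{1..n} -> Prop,
    forall f, I f <-> ideal_gen (fun g => exists m, M m /\ g = 'X_[m]) f.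

Definition monomial_prime (S : {set 'I_n}) : {mpoly K[n]} -> Prop :=
  ideal_gen (fun g => exists2 i, i \in S & g = 'X_i).

(* R(p_S) = K[x_i : i in S], realised as {mpoly K[#|S|]} where the
   variable number k corresponds to x_(enum_val k) (k-th element of S). *)
Definition loc_var (S : {set 'I_n}) (j : 'I_n) : {mpoly K[#|S|]} :=
  if [pick k : 'I_#|S| | enum_val (A := S) k == j] is Some k then 'X_k else 1.

(* the K-algebra map R -> R(p_S): x_j |-> 1 for j notin S, x_i |-> x_i *)
Definition loc_map (S : {set 'I_n}) (f : {mpoly K[n]}) : {mpoly K[#|S|]} :=
  mmap (fun c => c%:MP) (loc_var S) f.

Definition monomial_localization (S : {set 'I_n}) (I : {mpoly K[n]} -> Prop)
  : {mpoly K[#|S|]} -> Prop :=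
  ideal_gen (fun g => exists2 f, I f & g = loc_map S f).

End Monomial.

From mathcomp Require Import all_boot all_order all_algebra.
From mathcomp Require Import mpoly ring.
From Stdlib Require Import Classical.

Set Implicit Arguments. Unset Strict Implicit. Unset Printing Implicit Defensive.
Import GRing.Theory.
Local Open Scope ring_scope.

(* A prime P is associated to a monomial ideal J iff P is generated by a set W
   of variables and P = (J : x^b) for one monomial x^b, i.e. x^(b+a) lies in J
   exactly when the exponent a involves a variable of W.  Monomiality comes
   from a leading-term argument: if some monomial of f stays outside J after
   multiplying by every W-free monomial, then no nonzero W-free polynomial
   multiplies f into J.
   Localizing at p_S sets the variables outside S to 1, which on exponents is
   restriction to S.  If (x_t : t in W) = (I(p)^(k+1) : x^v), then extending v
   by a large exponent outside S gives (x_i : i in W) = (I^(k+1) : x^mu) in R;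
   copersistence of I makes this prime associated to I^k, say via x^nu, and
   restricting nu to S shows (x_t : t in W) is associated to I(p)^k. *)

Section Ideals.
Variable R : comNzRingType.
Implicit Types (G J P : R -> Prop) (a b f g : R).

Lemma ideal_gen_is_ideal G : is_ideal (ideal_gen G).
Proof.
split.
- by exists [::]; rewrite big_nil.
- move=> a b [s [sG ->]] [t [tG ->]]; exists (s ++ t); rewrite big_cat.
  by split=> // p; rewrite mem_cat => /orP[/sG|/tG].
- move=> r a [s [sG ->]]; exists [seq (r * p.1, p.2) | p <- s]; split.
    by move=> p /mapP[q /sG Gq ->].
  by rewrite big_map mulr_sumr; apply: eq_bigr => p _; rewrite mulrA.
Qed.

Lemma ideal_gen_sub G f : G f -> ideal_gen G f.
Proof.
by move=> Gf; exists [:: (1, f)]; rewrite big_seq1 mul1r; split=> // p /[!inE] /eqP ->.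
Qed.

Lemma ideal_sum J (T : eqType) (s : seq T) (F : T -> R) :
  is_ideal J -> (forall i, i \in s -> J (F i)) -> J (\sum_(i <- s) F i).
Proof.
case=> J0 JD _; elim: s => [|x s IHs] JF; first by rewrite big_nil.
rewrite big_cons; apply: JD; first exact/JF/mem_head.
by apply: IHs => i si; apply/JF; rewrite inE si orbT.
Qed.

Lemma ideal_gen_min G J : is_ideal J -> (forall g, G g -> J g) ->
  forall f, ideal_gen G f -> J f.
Proof.
move=> idJ GJ f [s [sG ->]]; apply: ideal_sum => // p /sG /GJ.
by case: idJ => _ _; apply.
Qed.

Lemma ideal_sub J a b : is_ideal J -> J a -> J b -> J (a - b).
Proof. by case=> _ JD JM Ja Jb; rewrite -mulN1r; apply/JD/JM. Qed.

Lemma prime_idealX P a k : is_prime_ideal P -> P (a ^+ k) -> P a.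
Proof.
case=> _ P1 PM; elim: k => [|k IHk]; first by rewrite expr0.
by rewrite exprS => /PM [|/IHk].
Qed.

Lemma prime_ideal_prod P (I : finType) (F : I -> R) :
  is_prime_ideal P -> P (\prod_i F i) -> exists i, P (F i).
Proof.
case=> _ P1 PM; apply: (big_ind (fun x => P x -> exists i, P (F i))) => //.
  by move=> x y Px Py /PM [/Px|/Py].
by move=> i _ PFi; exists i.
Qed.

Lemma eq_Ass J J' P P' : (forall f, J f <-> J' f) -> (forall f, P f <-> P' f) ->
  Ass J P -> Ass J' P'.
Proof.
move=> JJ' PP' [[[P0 PD PM] P1 Pprime] [f colonP]]; split.
  split; [split|..].
  - exact/PP'.
  - by move=> a b /PP' Pa /PP' Pb; apply/PP'/PD.
  - by move=> r a /PP' Pa; apply/PP'/PM.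
  - by move/PP'.
  - by move=> a b /PP' /Pprime [] /PP'; [left|right].
by exists f => g; rewrite -PP' colonP JJ'.
Qed.

End Ideals.

Lemma lepm_add n (a b c d : 'X_{1..n}) :
  (a <= c)%MM -> (b <= d)%MM -> (a + b <= c + d)%MM.
Proof.
move=> /mnm_lepP le_ac /mnm_lepP le_bd; apply/mnm_lepP => i.
by rewrite !mnmDE leq_add.
Qed.

Section Monomials.
Variables (K : fieldType) (n : nat).
Local Notation R := {mpoly K[n]}.
Implicit Types (U : 'X_{1..n} -> Prop) (W : 'I_n -> Prop) (P : R -> Prop).
Implicit Types (f g h : R) (a b c m : 'X_{1..n}).

Definition msupp_in U f := forall m, m \in msupp f -> U m.

Definition upward U := forall a b, U a -> U (a + b)%MM.

Lemma msupp_inX U m : msupp_in U 'X_[m] <-> U m.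
Proof.
split=> [|Um m']; first by apply; rewrite msuppX mem_head.
by rewrite msuppX inE => /eqP ->.
Qed.

Lemma msupp_inXM U m f :
  msupp_in U ('X_[m] * f) <-> (forall b, b \in msupp f -> U (m + b)%MM).
Proof.
rewrite /msupp_in mulrC; split=> Uf b.
  by move=> fb; apply: Uf; rewrite (perm_mem (msuppMX _ _)) map_f.
by rewrite (perm_mem (msuppMX _ _)) => /mapP [b' /Uf Ub' ->].
Qed.

Lemma msupp_inM U f g : upward U -> msupp_in U g -> msupp_in U (f * g).
Proof.
move=> upU Ug m /msuppM_le /allpairsP [[a b] /= [_ /Ug Ub ->]].
by rewrite addmC; apply: upU.
Qed.

Lemma msupp_in_ideal U : upward U -> is_ideal (msupp_in U).
Proof.
move=> upU; split; last by move=> f g; apply: msupp_inM.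
  by move=> m; rewrite msupp0.
by move=> f g Uf Ug m /msuppD_le; rewrite mem_cat => /orP [/Uf|/Ug].
Qed.

Lemma msupp_in_split U f : exists f1 f0,
  [/\ f = f1 + f0, msupp_in U f1 & msupp_in (fun m => ~ U m) f0].
Proof.
elim/mpolyind: f => [|c m f _ c_neq0 [f1 [f0 [-> Uf1 Uf0]]]].
  by exists 0, 0; rewrite addr0; split=> // m; rewrite msupp0.
have UcX V : V m -> msupp_in V (c *: 'X_[m]).
  by move=> Vm m' /msuppZ_le; rewrite msuppX inE => /eqP ->.
have [Um|nUm] := classic (U m).
  exists (c *: 'X_[m] + f1), f0; rewrite addrA; split=> //.
  by move=> m' /msuppD_le; rewrite mem_cat => /orP [/(UcX U Um)|/Uf1].
exists f1, (c *: 'X_[m] + f0); rewrite addrCA; split=> //.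
by move=> m' /msuppD_le; rewrite mem_cat => /orP [/(UcX (fun m => ~ U m) nUm)|/Uf0].
Qed.

Lemma mlead_in U f : f != 0 -> msupp_in U f -> U (mlead f).
Proof. by move=> /mlead_supp f_lead; apply. Qed.

Lemma ideal_msupp P f : is_ideal P -> (forall m, m \in msupp f -> P 'X_[m]) -> P f.
Proof.
move=> idP PX; rewrite [f]mpolyE; apply: ideal_sum => // m /PX.
by case: idP => _ _ PM; rewrite -mul_mpolyC; apply: PM.
Qed.

Lemma msupp_in_prime U : upward U -> ~ U 0%MM ->
  (forall a b, U (a + b)%MM -> U a \/ U b) -> is_prime_ideal (msupp_in U).
Proof.
move=> upU nU0 Uprime; split; [exact: msupp_in_ideal | by rewrite -mpolyX0 msupp_inX |].
move=> g h Ugh; apply: NNPP => /not_or_and [nUg nUh].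
have [g1 [g0 [eg Ug1 Ug0]]] := msupp_in_split U g.
have [h1 [h0 [eh Uh1 Uh0]]] := msupp_in_split U h.
have g0_neq0 : g0 != 0 by apply/eqP => g00; apply: nUg; rewrite eg g00 addr0.
have h0_neq0 : h0 != 0 by apply/eqP => h00; apply: nUh; rewrite eh h00 addr0.
have idU := msupp_in_ideal upU; case: (idU) => _ UD UM.
have : msupp_in U (g0 * h0).
  have -> : g0 * h0 = g * h - (h * g1 + g0 * h1) by rewrite eg eh; ring.
  by apply: (ideal_sub idU) => //; apply: UD; apply: UM.
move/(mlead_in (mulf_neq0 g0_neq0 h0_neq0)); rewrite mleadM // => /Uprime [].
- exact: Ug0 _ (mlead_supp g0_neq0).
- exact: Uh0 _ (mlead_supp h0_neq0).
Qed.

Lemma exists_common_witness (T : eqType) (s : seq T) (Q : 'X_{1..n} -> Prop)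
    (Rel : T -> 'X_{1..n} -> Prop) :
  Q 0%MM -> (forall a b, Q a -> Q b -> Q (a + b)%MM) ->
  (forall x a b, Rel x a -> Rel x (a + b)%MM) ->
  (forall x, x \in s -> exists2 a, Q a & Rel x a) ->
  exists2 a, Q a & forall x, x \in s -> Rel x a.
Proof.
move=> Q0 QD RelD; elim: s => [|x s IHs] sRel; first by exists 0%MM.
have [a Qa Rxa] := sRel x (mem_head x s).
have [b Qb Rsb] := IHs (fun y ys => sRel y (mem_behead (ys : y \in behead (x :: s)))).
exists (a + b)%MM => [|y]; first exact: QD.
by rewrite inE => /predU1P [->|/Rsb]; [apply: RelD | rewrite addmC; apply: RelD].
Qed.

Definition has_var W a := exists2 i, W i & (0 < a i)%N.

Lemma has_var0 W : ~ has_var W 0%MM.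
Proof. by case=> i _; rewrite mnm0E. Qed.

Lemma has_varD W a b : has_var W (a + b)%MM <-> has_var W a \/ has_var W b.
Proof.
split=> [[i Wi]|[] [i Wi ai]]; last 2 [by exists i; rewrite // mnmDE ltn_addr].
  by rewrite mnmDE addn_gt0 => /orP [ai|bi]; [left|right]; exists i.
by exists i; rewrite // mnmDE ltn_addl.
Qed.

Lemma has_var_upward W : upward (has_var W).
Proof. by move=> a b ha; apply/has_varD; left. Qed.

Lemma var_ideal_prime W : is_prime_ideal (msupp_in (has_var W)).
Proof.
by apply: msupp_in_prime; [exact: has_var_upward | exact: has_var0 | move=> a b /has_varD].
Qed.

Lemma prime_idealX_var P c : is_prime_ideal P -> P 'X_[c] ->
  exists2 i, P 'X_[U_(i)] & (0 < c i)%N.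
Proof.
move=> primeP; rewrite mpolyXE_id => /(prime_ideal_prod primeP) [i Pi].
exists i; first exact: prime_idealX Pi.
rewrite lt0n; apply/negP => /eqP ci0; move: Pi; rewrite ci0 expr0.
by case: primeP.
Qed.

Definition sat_free W U m := exists2 c, ~ has_var W c & U (c + m)%MM.

Lemma colon_not_sat_free U W f : upward U ->
  (forall c, ~ has_var W c -> ~ msupp_in U ('X_[c] * f)) ->
  ~ msupp_in (sat_free W U) f.
Proof.
move=> upU freeN satf.
have [c Wc Uc] : exists2 c, ~ has_var W c & forall m, m \in msupp f -> U (c + m)%MM.
  apply: exists_common_witness satf.
  - exact: has_var0.
  - by move=> a b Wa Wb /has_varD [].
  - by move=> m a b Uam; rewrite -addmA [(b + m)%MM]addmC addmA; apply: upU.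
by apply: (freeN c Wc); apply/msupp_inXM.
Qed.

Lemma msupp_in_free_mul U W f g : upward U -> ~ msupp_in (sat_free W U) f ->
  g != 0 -> msupp_in (fun a => ~ has_var W a) g -> ~ msupp_in U (g * f).
Proof.
move=> upU nsatf g_neq0 freeg Ugf.
have upS : upward (sat_free W U).
  by move=> m b [c Wc Ucm]; exists c; rewrite // addmA; apply: upU.
have [f1 [f0 [ef satf1 nsatf0]]] := msupp_in_split (sat_free W U) f.
have f0_neq0 : f0 != 0 by apply/eqP => f00; apply: nsatf; rewrite ef f00 addr0.
have : msupp_in (sat_free W U) (g * f0).
  have -> : g * f0 = g * f - g * f1 by rewrite ef; ring.
  apply: (ideal_sub (msupp_in_ideal upS)); last exact: msupp_inM.
  by move=> m /Ugf Um; exists 0%MM; [exact: has_var0 | rewrite add0m].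
move/(mlead_in (mulf_neq0 g_neq0 f0_neq0)); rewrite mleadM // => -[c Wc Uc].
apply: (nsatf0 _ (mlead_supp f0_neq0)); exists (c + mlead g)%MM; last by rewrite -addmA.
by case/has_varD => //; apply: freeg (mlead_supp g_neq0).
Qed.

Lemma Ass_var_ideal U P : upward U -> Ass (msupp_in U) P ->
  forall g, P g <-> msupp_in (has_var (fun i => P 'X_[U_(i)])) g.
Proof.
move=> upU [primeP [f colonP]]; set W := fun i => _.
have idP : is_ideal P by case: primeP.
have PX c : P 'X_[c] <-> has_var W c.
  split=> [|[i Wi ci]]; first exact: prime_idealX_var.
  have le_ic : (U_(i) <= c)%MM by rewrite lep1mP -lt0n.
  by rewrite -(submK le_ic) mpolyXD; case: idP => _ _; apply.
move=> g; split=> [Pg|Wg]; last by apply: ideal_msupp => // m /Wg /PX.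
apply: NNPP => nWg.
have [g1 [g0 [eg Wg1 freeg0]]] := msupp_in_split (has_var W) g.
have g0_neq0 : g0 != 0 by apply/eqP => g00; apply: nWg; rewrite eg g00 addr0.
have Pg0 : P g0.
  have -> : g0 = g - g1 by rewrite eg; ring.
  by apply: (ideal_sub idP) => //; apply: ideal_msupp => // m /Wg1 /PX.
apply: (msupp_in_free_mul upU _ g0_neq0 freeg0); last exact/colonP.
by apply: colon_not_sat_free => // c Wc /colonP /PX.
Qed.

Lemma Ass_var_idealP U W : upward U ->
  Ass (msupp_in U) (msupp_in (has_var W)) <->
  exists b, forall a, U (b + a)%MM <-> has_var W a.
Proof.
move=> upU; split=> [[_ [f colonf]] | [b Ub]]; last first.
  split; first exact: var_ideal_prime.
  by exists 'X_[b] => g; rewrite mulrC msupp_inXM; split=> Wg a /Wg /Ub.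
have : ~ msupp_in (sat_free W U) f.
  by apply: colon_not_sat_free => // c Wc /colonf /msupp_inX.
rewrite /msupp_in => /not_all_ex_not [b /(imply_to_and (b \in msupp f)) [fb nsatb]].
exists b => a; split=> [Uba|[i Wi ai]].
  by apply: NNPP => Wa; apply: nsatb; exists a; rewrite // addmC.
have Uib : U (U_(i) + b)%MM.
  have : msupp_in (has_var W) 'X_[U_(i)].
    by apply/msupp_inX; exists i; rewrite // mnm1E eqxx.
  by move/colonf/msupp_inXM; apply.
have le_ia : (U_(i) <= a)%MM by rewrite lep1mP -lt0n.
have -> : (b + a = U_(i) + b + (a - U_(i)))%MM.
  by rewrite [(U_(i) + b)%MM]addmC -addmA [(U_(i) + _)%MM]addmC submK.
exact: upU.
Qed.

Implicit Types (A B : 'X_{1..n} -> Prop) (J : R -> Prop).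

Definition mideal A : R -> Prop := ideal_gen (fun g => exists m, A m /\ g = 'X_[m]).

Definition mupset A m := exists2 a, A a & (a <= m)%MM.

Definition madd A B m := exists a b, [/\ A a, B b & m = (a + b)%MM].

Fixpoint mpow A k := if k is k'.+1 then madd A (mpow A k') else fun m => m = 0%MM.

Lemma mupset_upward A : upward (mupset A).
Proof. by move=> m b [a Aa le_am]; exists a; last exact: lepm_trans le_am (lem_addr _ _). Qed.

Lemma mideal_is_ideal A : is_ideal (mideal A).
Proof. exact: ideal_gen_is_ideal. Qed.

Lemma midealX A m : A m -> mideal A 'X_[m].
Proof. by move=> Am; apply: ideal_gen_sub; exists m. Qed.

Lemma midealP A f : mideal A f <-> msupp_in (mupset A) f.
Proof.
have idA := mideal_is_ideal A.
split=> [|Af]; last first.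
  apply: (ideal_msupp idA) => m /Af [a Aa le_am]; rewrite -(submK le_am) mpolyXD.
  by case: idA => _ _; apply; apply: midealX.
apply: ideal_gen_min; first exact: (msupp_in_ideal (mupset_upward (A := A))).
by move=> _ [m [Am ->]]; apply/msupp_inX; exists m => //; exact: lepm_refl.
Qed.

Lemma ideal_mul_mideal J1 J2 A B :
  (forall f, J1 f <-> mideal A f) -> (forall f, J2 f <-> mideal B f) ->
  forall f, ideal_mul J1 J2 f <-> mideal (madd A B) f.
Proof.
move=> eJ1 eJ2 f; split; apply: ideal_gen_min; try exact: ideal_gen_is_ideal.
  move=> _ [g [h [/eJ1/midealP Ag /eJ2/midealP Bh ->]]]; apply/midealP.
  move=> m /msuppM_le /allpairsP [[m1 m2] /= [/Ag [a Aa le1] /Bh [b Bb le2] ->]].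
  by exists (a + b)%MM; [exists a, b | exact: lepm_add].
move=> _ [m [[a [b [Aa Bb ->]]] ->]]; apply: ideal_gen_sub.
by exists 'X_[a], 'X_[b]; split; [apply/eJ1/midealX | apply/eJ2/midealX | rewrite mpolyXD].
Qed.

Lemma ideal_pow_mideal J A : (forall f, J f <-> mideal A f) ->
  forall k f, ideal_pow J k f <-> mideal (mpow A k) f.
Proof.
move=> eJ; elim=> [|k IHk] f /=; last exact: ideal_mul_mideal.
split=> // _; rewrite -[f]mulr1 -mpolyX0.
by case: (mideal_is_ideal (mpow A 0)) => _ _; apply; apply: midealX.
Qed.

Lemma ideal_pow_monomial J A : (forall f, J f <-> mideal A f) ->
  forall k f, ideal_pow J k f <-> msupp_in (mupset (mpow A k)) f.
Proof. by move=> eJ k f; rewrite (ideal_pow_mideal eJ) midealP. Qed.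

End Monomials.

Section Localization.
Variables (K : fieldType) (n : nat) (S : {set 'I_n}).
Local Notation R := {mpoly K[n]}.
Local Notation s := #|S|.
Local Notation sv t := (enum_val (A := S) t).
Implicit Types (A G : 'X_{1..n} -> Prop) (W : 'I_s -> Prop).
Implicit Types (a c m : 'X_{1..n}) (u v : 'X_{1..s}).

Definition mrestr m : 'X_{1..s} := [multinom m (sv k) | k < s].

Definition mext u c : 'X_{1..n} :=
  [multinom if [pick k | sv k == i] is Some k then u k else c i | i < n].

Lemma mrestrE m k : mrestr m k = m (sv k).
Proof. exact: mnmE. Qed.

Lemma mrestr0 : mrestr 0%MM = 0%MM.
Proof. by apply/mnmP => k; rewrite mrestrE !mnm0E. Qed.

Lemma mrestrD m1 m2 : mrestr (m1 + m2)%MM = (mrestr m1 + mrestr m2)%MM.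
Proof. by apply/mnmP => k; rewrite mnmDE !mrestrE mnmDE. Qed.

Lemma mrestr1 t : mrestr U_(sv t) = U_(t)%MM.
Proof. by apply/mnmP => k; rewrite mrestrE !mnm1E (inj_eq enum_val_inj). Qed.

Lemma mrestr_le m1 m2 : (m1 <= m2)%MM -> (mrestr m1 <= mrestr m2)%MM.
Proof. by move=> /mnm_lepP le12; apply/mnm_lepP => k; rewrite !mrestrE. Qed.

Lemma lepm_restr m1 m2 : (mrestr m1 <= mrestr m2)%MM ->
  (forall j, j \notin S -> m1 j <= m2 j)%N -> (m1 <= m2)%MM.
Proof.
move=> /mnm_lepP le12 out12; apply/mnm_lepP => j.
have [jS|/out12 //] := boolP (j \in S).
by rewrite -(enum_rankK_in jS jS) -!mrestrE.
Qed.

Lemma pick_sv t : [pick k | sv k == sv t] = Some t.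
Proof. by case: pickP => [k /eqP /enum_val_inj -> //|/(_ t)]; rewrite eqxx. Qed.

Lemma pick_notin j : j \notin S -> [pick k | sv k == j] = None.
Proof. by move=> jS; case: pickP => // k /eqP ekj; move: jS; rewrite -ekj enum_valP. Qed.

Lemma mext_sv u c t : mext u c (sv t) = u t.
Proof. by rewrite mnmE pick_sv. Qed.

Lemma mext_out u c j : j \notin S -> mext u c j = c j.
Proof. by move=> jS; rewrite mnmE pick_notin. Qed.

Lemma mrestr_mext u c : mrestr (mext u c) = u.
Proof. by apply/mnmP => k; rewrite mrestrE mext_sv. Qed.

Definition lift_vars W i := exists2 t, W t & sv t = i.

Lemma has_var_lift W a : has_var (lift_vars W) a <-> has_var W (mrestr a).
Proof.
split=> [[_ [t Wt <-]] at_gt0|[t Wt at_gt0]]; first by exists t; rewrite // mrestrE.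
by exists (sv t); [exists t | rewrite -mrestrE].
Qed.

Definition restr_upset A u := exists2 a, A a & (mrestr a <= u)%MM.

Lemma restr_upset_upward A : upward (restr_upset A).
Proof. by move=> u b [a Aa le_au]; exists a; last exact: lepm_trans le_au (lem_addr _ _). Qed.

Lemma colon_lift A W v :
  (forall u, restr_upset A (v + u)%MM <-> has_var W u) ->
  exists mu, forall c, mupset A (mu + c)%MM <-> has_var (lift_vars W) c.
Proof.
move=> colonW.
have [c _ Ac] : exists2 c, True & forall t, t \in enum 'I_s -> W t ->
    exists2 a, A a & (mrestr a <= v + U_(t))%MM /\ (a <= c)%MM.
  apply: exists_common_witness => // [t c b Act Wt|t _].
    have [a Aa [le1 le2]] := Act Wt.
    by exists a => //; split=> //; apply: lepm_trans le2 (lem_addr _ _).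
  have [Wt|] := classic (W t); last by exists 0%MM.
  have [|a Aa le] := (colonW U_(t)%MM).2; first by exists t; rewrite // mnm1E eqxx.
  by exists a => // _; exists a => //; split=> //; exact: lepm_refl.
(* On [S] the new witness is [v]; outside [S] it dominates all the witnesses above. *)
exists (mext v c) => b; split=> [[a Aa le]|/has_var_lift [t Wt bt]].
  apply/has_var_lift/colonW; exists a => //.
  by have := mrestr_le le; rewrite mrestrD mrestr_mext.
have [a Aa [le1 /mnm_lepP le2]] := Ac t (mem_enum _ t) Wt.
exists a => //; apply: lepm_restr => [|j jS].
  rewrite mrestrD mrestr_mext; apply: lepm_trans le1 (lepm_add (lepm_refl _) _).
  by rewrite lep1mP -lt0n.
by rewrite mnmDE mext_out //; apply: leq_trans (le2 j) (leq_addr _ _).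
Qed.

Lemma colon_restr A W nu :
  (forall c, mupset A (nu + c)%MM <-> has_var (lift_vars W) c) ->
  forall u, restr_upset A (mrestr nu + u)%MM <-> has_var W u.
Proof.
move=> colonW u; split=> [[a Aa le]|[t Wt ut]].
  have : mupset A (nu + mext u a)%MM.
    exists a => //; apply: lepm_restr => [|j jS]; first by rewrite mrestrD mrestr_mext.
    by rewrite mnmDE mext_out // leq_addl.
  by move/colonW/has_var_lift; rewrite mrestr_mext.
have [|a Aa le] := (colonW U_(sv t)%MM).2.
  by apply/has_var_lift; exists t; rewrite // mrestr1 mnm1E eqxx.
exists a => //; apply: lepm_trans (mrestr_le le) _.
by rewrite mrestrD mrestr1; apply: lepm_add (lepm_refl _) _; rewrite lep1mP -lt0n.
Qed.

Lemma loc_mapX m : loc_map S ('X_[m] : R) = 'X_[mrestr m].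
Proof.
rewrite /loc_map mmapX /mmap1 mpolyXE_id (bigID (fun i => i \in S)) /=.
rewrite [X in _ * X]big1 ?mulr1 => [|j jS]; last by rewrite /loc_var pick_notin ?expr1n.
by rewrite big_enum_val /=; apply: eq_bigr => k _; rewrite /loc_var pick_sv mrestrE.
Qed.

Lemma loc_mapD (f g : R) : loc_map S (f + g) = loc_map S f + loc_map S g.
Proof. exact: mmapD. Qed.

Lemma loc_mapM (f g : R) : loc_map S (f * g) = loc_map S f * loc_map S g.
Proof.
by rewrite /loc_map; exact: (mmap_is_multiplicative (@loc_var K n S) (@mpolyC s K)).1.
Qed.

Definition mrestr_set G u := exists2 a, G a & u = mrestr a.

Lemma localization_mideal I G : (forall f, I f <-> mideal G f) ->
  forall f, @monomial_localization K n S I f <-> mideal (mrestr_set G) f.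
Proof.
move=> eI f; split; apply: ideal_gen_min; try exact: ideal_gen_is_ideal.
  move=> _ [g /eI Ig ->].
  have [J0 JD JM] := mideal_is_ideal K (mrestr_set G).
  have idJ : is_ideal (fun g : R => mideal (mrestr_set G) (loc_map S g)).
    split=> [|a b Ja Jb|r a Ja] /=; last by rewrite loc_mapM; apply: JM.
      by rewrite /loc_map mmap0.
    by rewrite loc_mapD; apply: JD.
  apply: (ideal_gen_min idJ) Ig => _ [m [Gm ->]].
  by rewrite loc_mapX; apply: midealX; exists m.
move=> _ [u [[a Ga ->] ->]]; apply: ideal_gen_sub.
by exists 'X_[a]; [apply/eI/midealX | rewrite loc_mapX].
Qed.

Lemma mpow_restr G k u : mpow (mrestr_set G) k u <-> mrestr_set (mpow G k) u.
Proof.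
elim: k u => [|k IHk] u /=.
  by split=> [->|[a -> ->]]; [exists 0%MM; rewrite ?mrestr0 | exact: mrestr0].
split=> [[_ [_ [[a Ga ->] /IHk [b Gb ->] ->]]] | [_ [a [b [Ga Gb ->]]] ->]].
  by exists (a + b)%MM; [exists a, b | rewrite mrestrD].
by exists (mrestr a), (mrestr b); split; [exists a | apply/IHk; exists b | rewrite mrestrD].
Qed.

Lemma ideal_pow_localization I G : (forall f, I f <-> mideal G f) ->
  forall k f, ideal_pow (@monomial_localization K n S I) k f <->
              msupp_in (restr_upset (mpow G k)) f.
Proof.
move=> eI k f; rewrite (ideal_pow_monomial (localization_mideal eI)).
split=> Lf u /Lf; first by case=> _ /mpow_restr [a Ga ->]; exists a.
by case=> a Ga le; exists (mrestr a); first by apply/mpow_restr; exists a.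
Qed.

End Localization.

Theorem theorem3p20 (K : fieldType) (n : nat) (I : {mpoly K[n]} -> Prop)
  (S : {set 'I_n}) :
  is_monomial_ideal I ->
  (forall f, I f -> @monomial_prime K n S f) ->
  copersistent I ->
  copersistent (@monomial_localization K n S I).
Proof.
move=> [_ [G eqI]] _ copI k k_gt0 P' AssP'.
have powI := ideal_pow_monomial eqI.
have powL := ideal_pow_localization (S := S) eqI.
have {}AssP' := eq_Ass (powL k.+1) (fun g => iff_refl _) AssP'.
set W := fun t => P' 'X_[U_(t)].
have eqP' : forall g, P' g <-> msupp_in (has_var W) g.
  by apply: Ass_var_ideal AssP'; exact: restr_upset_upward.
have [v colon_v] :
    exists v, forall u, restr_upset (mpow G k.+1) (v + u)%MM <-> has_var W u.
  apply/(Ass_var_idealP K); first exact: restr_upset_upward.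
  exact: eq_Ass (fun f => iff_refl _) eqP' AssP'.
have [mu colon_mu] := colon_lift colon_v.
have AssQ : Ass (ideal_pow I k.+1) (msupp_in (has_var (lift_vars W))).
  apply: eq_Ass (fun f => iff_sym (powI k.+1 f)) (fun f => iff_refl _) _.
  by apply/(Ass_var_idealP K); [exact: mupset_upward | exists mu].
have [nu colon_nu] :
    exists nu, forall c, mupset (mpow G k) (nu + c)%MM <-> has_var (lift_vars W) c.
  apply/(Ass_var_idealP K); first exact: mupset_upward.
  exact: eq_Ass (powI k) (fun f => iff_refl _) (copI k k_gt0 _ AssQ).
apply: eq_Ass (fun f => iff_sym (powL k f)) (fun g => iff_sym (eqP' g)) _.
apply/(Ass_var_idealP K); first exact: restr_upset_upward.
by exists (mrestr S nu); apply: colon_restr.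
Qed.
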